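(* Let $(X,\langle\cdot|\cdot\rangle)$, $A$, $B$, $C$, $Y$, $H$, $\hat B$, $V$ be as in the context, and let $\lambda\in\mathbb{C}$. Consider $A+C-\lambda B-\lambda^2$ as an operator with domain $D(A)$. (i) $H+\hat B+V-\lambda$ is not injective if and only if $A+C-\lambda B-\lambda^2$ is not injective; in that case $\ker(H+\hat B+V-\lambda)=\{(\xi,i\lambda\xi):\xi\in\ker(A+C-\lambda B-\lambda^2)\}$. (ii) $H+\hat B+V-\lambda$ is bijective if and only if $A+C-\lambda B-\lambda^2$ is bijective; in that case, for all $\eta=(\eta_1,\eta_2)\in Y$, $(H+\hat B+V-\lambda)^{-1}\eta=(\xi,i(\lambda\xi+\eta_1))$ where $\xi=(A+C-\lambda B-\lambda^2)^{-1}[(B+\lambda)\eta_1-i\eta_2]$.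
   Context: $(X,\langle\cdot|\cdot\rangle)$ is a nontrivial complex Hilbert space with norm $\|\cdot\|$. $A:D(A)\to X$ is a densely defined self-adjoint linear operator with $\langle\xi|A\xi\rangle\geqslant\varepsilon\langle\xi|\xi\rangle$ for all $\xi\in D(A)$ for some $\varepsilon>0$; $A^{1/2}$ is its positive self-adjoint square root. $B:D(A^{1/2})\to X$ is linear with $\|B\xi\|^2\leqslant a^2\|A^{1/2}\xi\|^2+b^2\|\xi\|^2$ for all $\xi\in D(A^{1/2})$, for some $a\in[0,1)$, $b\in\mathbb{R}$, and $B$ is symmetric or bounded. $C:D(A^{1/2})\to X$ is linear with $\|C\xi\|^2\leqslant c^2\|A^{1/2}\xi\|^2+d^2\|\xi\|^2$ for all $\xi\in D(A^{1/2})$, for some real $c,d$. $Y:=D(A^{1/2})\times X$ with inner product $(\xi|\eta):=\langle A^{1/2}\xi_1|A^{1/2}\eta_1\rangle+\langle\xi_2|\eta_2\rangle$. $H:D(A)\times D(A^{1/2})\to Y$, $H\xi:=(-i\xi_2,iA\xi_1)$; $\hat B:D(H)\to Y$, $\hat B\xi:=(0,-B\xi_2)$; $V:Y\to Y$, $V\xi:=(0,iC\xi_1)$; $H+\hat B+V-\lambda$ has domain $D(H)$. *)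

From HB Require Import structures.
From mathcomp Require Import all_boot all_order all_algebra.
From mathcomp Require Import complex.
From mathcomp Require Import reals.
Set Implicit Arguments. Unset Strict Implicit. Unset Printing Implicit Defensive.
Import Order.TTheory GRing.Theory Num.Theory ComplexField.
Local Open Scope ring_scope.

(* A complex inner product space: vector space X over C := R[i] with an
   inner product ip, antilinear in the first and linear in the second
   argument (physics convention <.|.>). *)
Definition is_inner_product (R : realType) (X : lmodType R[i])
  (ip : X -> X -> R[i]) : Prop :=
  [/\ (forall (a : R[i]) (x y z : X), ip x (a *: y + z) = a * ip x y + ip x z),
      (forall x y : X, ip y x = (ip x y)^*),
      (forall x : X, 0 <= ip x x) &
      (forall x : X, ip x x = 0 -> x = 0)].

Definition ipnorm (R : realType) (X : lmodType R[i]) (ip : X -> X -> R[i])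
  (x : X) : R := Num.sqrt (complex.Re (ip x x)).

Definition ip_complete (R : realType) (X : lmodType R[i])
  (ip : X -> X -> R[i]) : Prop :=
  forall u : nat -> X,
    (forall e : R, 0 < e -> exists N, forall m n, (N <= m)%N -> (N <= n)%N ->
        ipnorm ip (u m - u n) < e) ->
    exists l : X, forall e : R, 0 < e -> exists N, forall n, (N <= n)%N ->
        ipnorm ip (u n - l) < e.

Definition is_hilbert (R : realType) (X : lmodType R[i])
  (ip : X -> X -> R[i]) : Prop := is_inner_product ip /\ ip_complete ip.

Definition dense_in (R : realType) (X : lmodType R[i]) (ip : X -> X -> R[i])
  (D : X -> Prop) : Prop :=
  forall x : X, forall e : R, 0 < e -> exists y, D y /\ ipnorm ip (x - y) < e.

Definition subspace (R : realType) (X : lmodType R[i]) (D : X -> Prop) : Prop :=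
  D 0 /\ forall (a : R[i]) (x y : X), D x -> D y -> D (a *: x + y).

(* T : D -> X is linear (T is represented by a total function, only its
   values on D matter) *)
Definition linear_on (R : realType) (X : lmodType R[i]) (D : X -> Prop)
  (T : X -> X) : Prop :=
  subspace D /\ forall (a : R[i]) (x y : X), D x -> D y ->
    T (a *: x + y) = a *: T x + T y.

Definition symmetric_on (R : realType) (X : lmodType R[i])
  (ip : X -> X -> R[i]) (D : X -> Prop) (T : X -> X) : Prop :=
  forall x y, D x -> D y -> ip (T x) y = ip x (T y).

Definition adj_dom (R : realType) (X : lmodType R[i])
  (ip : X -> X -> R[i]) (D : X -> Prop) (T : X -> X) (y : X) : Prop :=
  exists z : X, forall x, D x -> ip y (T x) = ip z x.

(* densely defined self-adjoint operator T with domain D: T symmetric and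
   D(T^* ) is contained in D (hence T = T^* ) *)
Definition self_adjoint (R : realType) (X : lmodType R[i])
  (ip : X -> X -> R[i]) (D : X -> Prop) (T : X -> X) : Prop :=
  [/\ linear_on D T, dense_in ip D, symmetric_on ip D T &
      forall y, adj_dom ip D T y -> D y].

Definition is_pos_sqrt (R : realType) (X : lmodType R[i])
  (ip : X -> X -> R[i]) (DA : X -> Prop) (A : X -> X)
  (DS : X -> Prop) (S : X -> X) : Prop :=
  [/\ self_adjoint ip DS S,
      (forall x, DS x -> 0 <= ip x (S x)),
      (forall x, DA x <-> (DS x /\ DS (S x))) &
      (forall x, DA x -> S (S x) = A x)].

Definition bounded_on (R : realType) (X : lmodType R[i])
  (ip : X -> X -> R[i]) (D : X -> Prop) (T : X -> X) : Prop :=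
  exists M : R, forall x, D x -> ipnorm ip (T x) <= M * ipnorm ip x.

Definition op_injective (T U : Type) (D : T -> Prop) (f : T -> U) : Prop :=
  forall x y, D x -> D y -> f x = f y -> x = y.

Definition op_bijective (T U : Type) (D : T -> Prop) (E : U -> Prop)
  (f : T -> U) : Prop :=
  [/\ op_injective D f, (forall x, D x -> E (f x)) &
      (forall y, E y -> exists x, D x /\ f x = y)].

(* The operators of the paper.  Y = D(A^{1/2}) x X, D(H) = D(A) x D(A^{1/2}). *)
Definition Ymem (R : realType) (X : lmodType R[i]) (DS : X -> Prop)
  (p : X * X) : Prop := DS p.1.

Definition DH (R : realType) (X : lmodType R[i]) (DA DS : X -> Prop)
  (p : X * X) : Prop := DA p.1 /\ DS p.2.

Definition Hop (R : realType) (X : lmodType R[i]) (A : X -> X) (p : X * X)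
  : X * X := (- ('i *: p.2), 'i *: A p.1).

Definition Bhat (R : realType) (X : lmodType R[i]) (B : X -> X) (p : X * X)
  : X * X := (0, - B p.2).

Definition Vop (R : realType) (X : lmodType R[i]) (C : X -> X) (p : X * X)
  : X * X := (0, 'i *: C p.1).

Definition Top (R : realType) (X : lmodType R[i]) (A B C : X -> X)
  (lam : R[i]) (p : X * X) : X * X :=
  Hop A p + Bhat B p + Vop C p - lam *: p.

Definition Lop (R : realType) (X : lmodType R[i]) (A B C : X -> X)
  (lam : R[i]) (x : X) : X :=
  A x + C x - lam *: B x - lam ^+ 2 *: x.

From HB Require Import structures.
From mathcomp Require Import all_boot all_order all_algebra.
From mathcomp Require Import complex.
From mathcomp Require Import reals.
Import Order.TTheory GRing.Theory Num.Theory ComplexField.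
Local Open Scope ring_scope.

(* The first row of (H + Bhat + V - lambda) p = eta reads -i p2 - lambda p1 = eta1, i.e.
   p = (p1, i (lambda p1 + eta1)).  Substituting this into the second row turns it into
   i (A + C - lambda B - lambda^2) p1 = eta2 + i (B + lambda) eta1, so solving the first-order
   system is the same as solving the quadratic pencil.  Only the linearity of B and the
   inclusion D(A) in D(A^{1/2}) are used. *)

Section LinearOn.
Context {R : realType} {X : lmodType R[i]}.
Implicit Types (D : X -> Prop) (T : X -> X).

Lemma subspace0 {D} : subspace D -> D 0.
Proof. by case. Qed.

Lemma subspaceZ {D} a x : subspace D -> D x -> D (a *: x).
Proof. by move=> [D0 DD] Dx; rewrite -[_ *: x]addr0; apply: DD. Qed.

Lemma subspaceD {D} x y : subspace D -> D x -> D y -> D (x + y).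
Proof. by move=> [_ DD] Dx Dy; rewrite -[x]scale1r; apply: DD. Qed.

Lemma linear_on0 {D T} : linear_on D T -> T 0 = 0.
Proof.
move=> [[D0 _] TD]; have := TD 1 0 0 D0 D0; rewrite !scale1r addr0 => T00.
by apply: (addrI (T 0)); rewrite addr0 -T00.
Qed.

Lemma linear_onD {D T x y} : linear_on D T -> D x -> D y -> T (x + y) = T x + T y.
Proof. by move=> [_ TD] Dx Dy; rewrite -[x]scale1r TD // !scale1r. Qed.

Lemma linear_onZ {D T a x} : linear_on D T -> D x -> T (a *: x) = a *: T x.
Proof.
move=> TL Dx; have [[D0 _] TD] := TL.
by rewrite -[_ *: x]addr0 TD // (linear_on0 TL) addr0.
Qed.

End LinearOn.

Lemma pos_sqrt_dom_sub {R : realType} {X : lmodType R[i]} {ip : X -> X -> R[i]}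
    {DA} {A : X -> X} {DS} {S : X -> X} :
  is_pos_sqrt ip DA A DS S -> forall x, DA x -> DS x.
Proof. by case=> _ _ DAS _ x /DAS []. Qed.

Lemma scaleii {R : realType} {X : lmodType R[i]} (u : X) : 'i *: ('i *: u) = - u.
Proof. by rewrite scalerA mulCii scaleN1r. Qed.

Section Pencil.
Context {R : realType} {X : lmodType R[i]}.
Context {DA DS : X -> Prop} {A B C : X -> X} {lam : R[i]}.
Hypothesis B_lin : linear_on DS B.
Hypothesis DA_sub : forall x, DA x -> DS x.

Local Notation T := (Top A B C lam).
Local Notation L := (Lop A B C lam).
Local Notation DH := (DH DA DS).

Let DS_sub : subspace DS := B_lin.1.

Definition pencil_lift (x e : X) : X * X := (x, 'i *: (lam *: x + e)).

Lemma Top_fst p : (T p).1 = - ('i *: p.2) - lam *: p.1.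
Proof. by rewrite /Top /= !addr0. Qed.

Lemma Top_snd p : (T p).2 = 'i *: A p.1 - B p.2 + 'i *: C p.1 - lam *: p.2.
Proof. by []. Qed.

Lemma pencil_lift_Top_fst p : pencil_lift p.1 (T p).1 = p.
Proof.
case: p => x y; rewrite /pencil_lift /Top /= !addr0 addrC subrK.
by rewrite scalerN scaleii opprK.
Qed.

Lemma DH_pencil_lift {x e} : DA x -> DS e -> DH (pencil_lift x e).
Proof.
move=> DAx DSe; split=> //=.
by apply: subspaceZ => //; apply: subspaceD => //; apply: subspaceZ => //; apply: DA_sub.
Qed.

Lemma Top_fst_DS {p} : DH p -> DS (T p).1.
Proof.
case: p => x y [/DA_sub DSx DSy]; rewrite /Top /= !addr0.
by apply: subspaceD; rewrite // -scaleNr; apply: subspaceZ.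
Qed.

Lemma Top_pencil_lift {x e} : DS x -> DS e ->
  T (pencil_lift x e) = (e, 'i *: (L x - B e - lam *: e)).
Proof.
move=> DSx DSe; have DSlx : DS (lam *: x) by apply: subspaceZ.
have DSlxe : DS (lam *: x + e) by apply: subspaceD.
rewrite [LHS]surjective_pairing Top_fst Top_snd /=; congr (_, _).
  by rewrite scaleii opprK addrC addKr.
rewrite (linear_onZ B_lin) // (linear_onD B_lin) // (linear_onZ B_lin) // /Lop.
rewrite [lam *: ('i *: _)]scalerA mulrC -scalerA -scalerBr -scalerDr -scalerBr.
congr (_ *: _); rewrite scalerDr scalerA -expr2 !opprD !addrA.
congr (_ - _); rewrite [RHS]addrAC; congr (_ - _); rewrite [LHS]addrAC; congr (_ - _).
exact: addrAC.
Qed.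

Lemma Top_eqP {p eta} : DH p -> DS eta.1 ->
  T p = eta <->
  p = pencil_lift p.1 eta.1 /\ L p.1 = B eta.1 + lam *: eta.1 - 'i *: eta.2.
Proof.
move=> [/DA_sub DSp1 _] DSe1; split.
  move=> Tp; have p_lift : p = pencil_lift p.1 eta.1 by rewrite -Tp pencil_lift_Top_fst.
  split=> //; move: Tp; rewrite p_lift Top_pencil_lift // => <- /=.
  by rewrite scaleii opprK -[L p.1 - _ - _]addrA -opprD addrC addNKr.
case=> p_lift Lp; rewrite p_lift Top_pencil_lift // Lp -[_ - B eta.1 - _]addrA -opprD.
rewrite addrAC subrr add0r scalerN scaleii opprK.
by case: eta {DSe1 Lp p_lift}.
Qed.

Lemma pencil_lift0 x : pencil_lift x 0 = (x, ('i * lam) *: x).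
Proof. by rewrite /pencil_lift addr0 scalerA. Qed.

Lemma Top_pencil_lift_solution eta xi : DS eta.1 -> DA xi ->
  L xi = B eta.1 + lam *: eta.1 - 'i *: eta.2 ->
  DH (pencil_lift xi eta.1) /\ T (pencil_lift xi eta.1) = eta.
Proof.
move=> DSe DAxi Lxi; have Dp := DH_pencil_lift DAxi DSe.
by split=> //; apply/(Top_eqP Dp DSe).
Qed.

Lemma Top_injectiveP : op_injective DH T <-> op_injective DA L.
Proof.
have DS0 := subspace0 DS_sub.
split=> [Tinj x y DAx DAy Lxy | Linj p q Dp Dq Tpq].
  suff /(congr1 fst) : pencil_lift x 0 = pencil_lift y 0 by [].
  apply: Tinj; try exact: DH_pencil_lift.
  rewrite (Top_pencil_lift (DA_sub _ DAx) DS0) (Top_pencil_lift (DA_sub _ DAy) DS0).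
  by congr (_, _ *: (_ - _ - _)).
have DSe := Top_fst_DS Dq.
have [_ Lp] := (Top_eqP Dp DSe).1 Tpq.
have [_ Lq] := (Top_eqP Dq DSe).1 erefl.
have p1q1 : p.1 = q.1 := Linj _ _ Dp.1 Dq.1 (etrans Lp (esym Lq)).
by rewrite -[p]pencil_lift_Top_fst -[q]pencil_lift_Top_fst Tpq p1q1.
Qed.

Lemma Top_kernel p :
  DH p /\ T p = 0 <-> exists xi, (DA xi /\ L xi = 0) /\ p = (xi, ('i * lam) *: xi).
Proof.
have DS0 := subspace0 DS_sub.
have rhs0 : B 0 + lam *: 0 - 'i *: 0 = 0 :> X.
  by rewrite (linear_on0 B_lin) !scaler0 addr0 subr0.
split=> [[Dp Tp0] | [xi [[DAxi Lxi] ->]]].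
  have [p_lift Lp] := (Top_eqP (eta := 0) Dp DS0).1 Tp0.
  exists p.1; split; last by rewrite -pencil_lift0; exact: p_lift.
  by split; [exact: Dp.1 | rewrite Lp; exact: rhs0].
rewrite -pencil_lift0; apply: (Top_pencil_lift_solution 0) => //.
by rewrite Lxi; symmetry; exact: rhs0.
Qed.

Lemma Top_bijectiveP :
  op_bijective DH (Ymem DS) T <-> op_bijective DA (fun _ => True) L.
Proof.
have DS0 := subspace0 DS_sub.
split=> [[Tinj _ Tsurj] | [Linj _ Lsurj]].
  split=> [||y _]; [exact/Top_injectiveP | by [] |].
  have [p [Dp Tp]] := Tsurj (0, 'i *: y) DS0.
  have [_ Lp] := (Top_eqP (eta := (0, 'i *: y)) Dp DS0).1 Tp.
  exists p.1; split; first exact: Dp.1.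
  by rewrite Lp /= (linear_on0 B_lin) scaler0 addr0 sub0r scaleii opprK.
split=> [|p Dp|eta DSe]; [exact/Top_injectiveP | exact: Top_fst_DS |].
have [xi [DAxi Lxi]] := Lsurj (B eta.1 + lam *: eta.1 - 'i *: eta.2) I.
by exists (pencil_lift xi eta.1); apply: Top_pencil_lift_solution.
Qed.

End Pencil.

Theorem theorem13 (R : realType) (X : lmodType R[i]) (ip : X -> X -> R[i])
  (DA : X -> Prop) (A : X -> X) (DS : X -> Prop) (S : X -> X)
  (B C : X -> X) (eps a b c d : R) (lam : R[i]) :
  is_hilbert ip ->
  (exists x : X, x <> 0) ->
  self_adjoint ip DA A ->
  0 < eps ->
  (forall x, DA x -> (eps%:C)%C * ip x x <= ip x (A x)) ->
  is_pos_sqrt ip DA A DS S ->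
  linear_on DS B ->
  0 <= a -> a < 1 ->
  (forall x, DS x -> complex.Re (ip (B x) (B x)) <=
      a ^+ 2 * complex.Re (ip (S x) (S x)) + b ^+ 2 * complex.Re (ip x x)) ->
  (symmetric_on ip DS B \/ bounded_on ip DS B) ->
  linear_on DS C ->
  (forall x, DS x -> complex.Re (ip (C x) (C x)) <=
      c ^+ 2 * complex.Re (ip (S x) (S x)) + d ^+ 2 * complex.Re (ip x x)) ->
  (* (i) *)
  ((~ op_injective (DH DA DS) (Top A B C lam) <->
    ~ op_injective DA (Lop A B C lam)) /\
   (~ op_injective (DH DA DS) (Top A B C lam) ->
    forall p : X * X,
      (DH DA DS p /\ Top A B C lam p = 0) <->
      (exists xi, (DA xi /\ Lop A B C lam xi = 0) /\ p = (xi, ('i * lam) *: xi))))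
  /\
  (* (ii) *)
  ((op_bijective (DH DA DS) (Ymem DS) (Top A B C lam) <->
    op_bijective DA (fun _ => True) (Lop A B C lam)) /\
   (op_bijective (DH DA DS) (Ymem DS) (Top A B C lam) ->
    forall eta : X * X, Ymem DS eta ->
    forall xi : X, DA xi ->
      Lop A B C lam xi = B eta.1 + lam *: eta.1 - 'i *: eta.2 ->
      DH DA DS (xi, 'i *: (lam *: xi + eta.1)) /\
      Top A B C lam (xi, 'i *: (lam *: xi + eta.1)) = eta)).
Proof.
move=> _ _ _ _ _ A_sqrt B_lin _ _ _ _ _ _.
have DA_sub := pos_sqrt_dom_sub A_sqrt.
split; split.
- by rewrite (Top_injectiveP B_lin DA_sub).
- by move=> _ p; exact: (Top_kernel B_lin DA_sub).
- exact: (Top_bijectiveP B_lin DA_sub).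
- by move=> _ eta DSe xi DAxi; exact: (Top_pencil_lift_solution B_lin DA_sub).
Qed.
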